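(* Let $k\ge1$ and let $B\in\mathfrak{gl}_n(\mathbb C)$ satisfy $B[B,B^*]=-B$, $B^k\neq0$, $B^{k+1}=0$. If $B'=hBh^{-1}$ for some $h\in\mathrm{GL}_n(\mathbb C)$ and $B'$ also satisfies $B'[B',B'^*]=-B'$, then $B'=UBU^{-1}$ for some $U\in\mathrm U(n)$.
   Context: $B^*$ is the conjugate transpose, $[X,Y]=XY-YX$. *)

From HB Require Import structures.
From mathcomp Require Import all_boot all_order all_algebra.
From mathcomp Require Export complex.
Set Implicit Arguments. Unset Strict Implicit. Unset Printing Implicit Defensive.
Import Order.TTheory GRing.Theory Num.Theory.
Local Open Scope ring_scope.

Definition conjtr (R : rcfType) (n : nat) (B : 'M[R[i]]_n) : 'M[R[i]]_n :=
  (map_mx Num.conj B)^T.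

Definition mxcomm (R : rcfType) (n : nat) (X Y : 'M[R[i]]_n) : 'M[R[i]]_n :=
  X *m Y - Y *m X.

Definition unitary (R : rcfType) (n : nat) (U : 'M[R[i]]_n) : Prop :=
  U *m conjtr U = 1%:M.

From HB Require Import structures.
From mathcomp Require Import all_boot all_order all_algebra.
From mathcomp Require Import complex zify.
Set Implicit Arguments. Unset Strict Implicit. Unset Printing Implicit Defensive.
Import Order.TTheory GRing.Theory Num.Theory.
Local Open Scope ring_scope.
Local Open Scope sesquilinear_scope.

(* Write M := B B^*.  As B B^* B = M B, the relation B [B, B^*] = -B reads M B = B M + B:
   on row vectors, on which matrices act from the right, B lowers the eigenvalues of the
   hermitian matrix M by 1 and B^* raises them by 1, and |v B|^2 = a |v|^2 when v M = a v.
   So if S is invariant under B and B^* and mu is the largest exponent with S B^mu <> 0,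
   raising a nonzero vector of S B^mu mu times gives a unit vector x of S with x M = mu x
   and x B^* = 0, whose chain x, x B, ..., x B^mu is orthogonal with a Gram matrix that
   depends on mu alone.  The span of the chain and its orthogonal complement in S are both
   invariant.  Splitting off chains of equal length from S and from S', which is possible
   as long as the ranks of S B^j and S' B'^j agree, builds an isometry from S onto S'
   intertwining B and B'.  For S = S' = C^n the rank condition follows from similarity. *)

Section Chains.
Variables (F : fieldType) (n : nat).
Implicit Types (X : 'M[F]_n).

Lemma stablemxX m (S : 'M[F]_(m, n)) X j : stablemx S X -> stablemx S (X ^+ j).
Proof.
move=> SX; elim: j => [|j IH]; first by rewrite expr0 mulmx1.
by rewrite exprSr -mulmxE mulmxA (submx_trans (submxMr _ IH)).
Qed.

Lemma intertwinedX m (A : 'M[F]_(m, n)) (T : 'M[F]_m) X j :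
  A *m X = T *m A -> A *m X ^+ j = T ^+ j *m A.
Proof.
move=> AX; elim: j => [|j IH]; first by rewrite !expr0 mulmx1 mul1mx.
by rewrite exprSr -mulmxE mulmxA IH -mulmxA AX mulmxA mulmxE -exprSr.
Qed.

Lemma last_nonzero_mulmxX m (S : 'M[F]_(m, n)) X N :
  S != 0 -> S *m X ^+ N = 0 -> exists mu, S *m X ^+ mu != 0 /\ S *m X ^+ mu.+1 = 0.
Proof.
move=> Sn0; elim: N => [|N IH] SXN.
  by rewrite expr0 mulmx1 in SXN; rewrite SXN eqxx in Sn0.
by have [/IH|] := eqVneq (S *m X ^+ N) 0; last exists N.
Qed.

Definition chainmx (B : 'M[F]_n) (x : 'rV[F]_n) p : 'M[F]_(p, n) :=
  \matrix_(i < p) (x *m B ^+ i).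

Definition shiftmx p : 'M[F]_p := \matrix_(i, j) (i.+1 == j)%:R.

Lemma chainmx_row_sub B x p j : (j < p)%N -> (x *m B ^+ j <= chainmx B x p)%MS.
Proof. by move=> jp; rewrite -(rowK (fun i : 'I_p => x *m B ^+ i) (Ordinal jp)) row_sub. Qed.

Lemma chainmx_sub m (S : 'M[F]_(m, n)) B x p :
  (x <= S)%MS -> stablemx S B -> (chainmx B x p <= S)%MS.
Proof.
by move=> xS SB; apply/row_subP => i; rewrite rowK (submx_trans (submxMr _ xS)) ?stablemxX.
Qed.

Lemma chainmx_mulB B x p :
  x *m B ^+ p = 0 -> chainmx B x p *m B = shiftmx p *m chainmx B x p.
Proof.
move=> xBp; apply/row_matrixP => i; rewrite !row_mul rowK -mulmxA mulmxE -exprSr.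
have [ip|] := ltnP i.+1 p.
  suff -> : row i (shiftmx p) = delta_mx 0 (Ordinal ip) by rewrite -rowE rowK.
  by apply/rowP => j; rewrite !mxE eqxx eq_sym.
rewrite leq_eqVlt ltnNge ltn_ord orbF => /eqP ip.
suff -> : row i (shiftmx p) = 0 by rewrite mul0mx -ip.
by apply/rowP => j; rewrite !mxE gtn_eqF // -ip.
Qed.

Lemma chainmx_eq0 B x p : (chainmx B x p.+1 == 0) = (x == 0).
Proof.
apply/eqP/eqP => [/(congr1 (row 0))|->].
  by rewrite rowK expr0 mulmx1 row0.
by apply/row_matrixP => i; rewrite rowK mul0mx row0.
Qed.

End Chains.

Section Adjoint.
Variables (C : numClosedFieldType) (n : nat).
Implicit Types (a : C).

Lemma trmxC_mul m p q (A : 'M[C]_(m, p)) (B : 'M[C]_(p, q)) :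
  (A *m B)^t* = B^t* *m A^t*.
Proof. by rewrite trmx_mul map_mxM. Qed.

Lemma trmxCD m p (A B : 'M[C]_(m, p)) : (A + B)^t* = A^t* + B^t*.
Proof. by rewrite linearD /= map_mxD. Qed.

Lemma trmxCB m p (A B : 'M[C]_(m, p)) : (A - B)^t* = A^t* - B^t*.
Proof. by rewrite linearB /= map_mxB. Qed.

Lemma trmxCZ m p a (A : 'M[C]_(m, p)) : (a *: A)^t* = a^* *: A^t*.
Proof. by rewrite linearZ /= map_mxZ. Qed.

Lemma trmxC0 m p : (0 : 'M[C]_(m, p))^t* = 0.
Proof. by rewrite trmx0 map_mx0. Qed.

Lemma trmxCX p (A : 'M[C]_p) j : (A ^+ j)^t* = A^t* ^+ j.
Proof.
elim: j => [|j IH]; first by rewrite !expr0 trmx1 map_mx1.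
by rewrite exprS -mulmxE trmxC_mul IH exprSr mulmxE.
Qed.

Lemma mul_trmxC_row m p q (A : 'M[C]_(m, p)) (B : 'M[C]_(q, p)) i j :
  (A *m B^t*) i j = (row i A *m (row j B)^t*) 0 0.
Proof. by rewrite !mxE; apply: eq_bigr => k _; rewrite !mxE. Qed.

Lemma mul_trmxC_eq0 m p (A : 'M[C]_(m, p)) : (A *m A^t* == 0) = (A == 0).
Proof.
apply/eqP/eqP => [AA0|->]; last by rewrite mul0mx.
apply/matrixP => i k; have /eqP := congr1 (fun X : 'M_m => X i i) AA0.
rewrite !mxE psumr_eq0 => [/allP/(_ k (mem_index_enum _))|l _]; last first.
  by rewrite !mxE mul_conjC_ge0.
by rewrite !mxE mul_conjC_eq0 => /eqP.
Qed.

Lemma trmxC_gram m p (A : 'M[C]_(m, p)) : (A *m A^t*)^t* = A *m A^t*.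
Proof. by rewrite trmxC_mul trmxCK. Qed.

Lemma trmxC1 p : (1%:M : 'M[C]_p)^t* = 1%:M.
Proof. by rewrite trmx1 map_mx1. Qed.

Lemma mxrank_trmxC m p (A : 'M[C]_(m, p)) : \rank (A^t*) = \rank A.
Proof. by rewrite mxrank_map mxrank_tr. Qed.

Lemma ortho_submx m m' p q (A : 'M[C]_(m, n)) (A' : 'M[C]_(m', n))
    (W : 'M[C]_(p, n)) (W' : 'M[C]_(q, n)) :
  (W <= A)%MS -> (W' <= A')%MS -> A *m A'^t* = 0 -> W *m W'^t* = 0.
Proof.
move=> /submxP[D ->] /submxP[D' ->] AA'.
by rewrite trmxC_mul mulmxA -(mulmxA D) AA' mulmx0 mul0mx.
Qed.

Lemma ortho_sym m p (A : 'M[C]_(m, n)) (A' : 'M[C]_(p, n)) :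
  A *m A'^t* = 0 -> A' *m A^t* = 0.
Proof. by move=> /(congr1 (fun X => X^t*)); rewrite trmxC_mul trmxCK trmxC0. Qed.

Lemma exists_normalized (x : 'rV[C]_n) :
  x != 0 -> exists c : C, (c *: x) *m (c *: x)^t* = 1%:M.
Proof.
rewrite -mul_trmxC_eq0 [x *m _]mx11_scalar => xx0.
set s := (x *m x^t*) 0 0 in xx0 *.
have s_ge0 : 0 <= s by rewrite /s mxE sumr_ge0 // => k _; rewrite !mxE mul_conjC_ge0.
have s_neq0 : s != 0 by apply: contraNneq xx0 => ->; rewrite raddf0.
exists (sqrtC s)^-1.
rewrite trmxCZ -scalemxAl -scalemxAr scalerA geC0_conj ?invr_ge0 ?sqrtC_ge0 //.
by rewrite -invfM -expr2 sqrtCK [x *m _]mx11_scalar -/s scale_scalar_mx mulVf.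
Qed.

Lemma gram_eq_ker m p (A A' : 'M[C]_(m, n)) (W : 'M[C]_(p, m)) :
  A *m A^t* = A' *m A'^t* -> W *m A = 0 -> W *m A' = 0.
Proof.
move=> gramA WA; apply/eqP; rewrite -mul_trmxC_eq0 trmxC_mul mulmxA -(mulmxA W).
by rewrite -gramA mulmxA WA !mul0mx.
Qed.

Lemma gram_eq_rank m (A A' : 'M[C]_(m, n)) :
  A *m A^t* = A' *m A'^t* -> \rank A = \rank A'.
Proof.
move=> gramA; have kerA : (kermx A == kermx A')%MS.
  apply/andP; split; rewrite sub_kermx; apply/eqP.
    exact: gram_eq_ker gramA (mulmx_ker A).
  exact: gram_eq_ker (esym gramA) (mulmx_ker A').
have := mxrank_ker A; have := mxrank_ker A'; rewrite (eqmx_rank kerA).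
by have := rank_leq_row A; have := rank_leq_row A'; lia.
Qed.

Lemma gram_eq_rank_mul m p (A A' : 'M[C]_(m, n)) (W : 'M[C]_(p, m)) :
  A *m A^t* = A' *m A'^t* -> \rank (W *m A) = \rank (W *m A').
Proof.
move=> gramA; apply: gram_eq_rank.
by rewrite !trmxC_mul !mulmxA -(mulmxA W A) -(mulmxA W A') gramA.
Qed.

End Adjoint.

Section CommutatorRelation.
Variables (C : numClosedFieldType) (n : nat) (B : 'M[C]_n).
Hypothesis relB : B *m (B *m B^t* - B^t* *m B) = - B.
Local Notation M := (B *m B^t*).
Implicit Types (v w x : 'rV[C]_n) (a b : C).

Lemma mulBM : B *m M = M *m B - B.
Proof. by rewrite -[B *m M](subrK (B *m (B^t* *m B))) -mulmxBr relB addrC mulmxA. Qed.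

Lemma mulBtM : B^t* *m M = M *m B^t* + B^t*.
Proof.
have /(congr1 (fun X => X^t*)) := mulBM.
by rewrite trmxC_mul trmxC_gram trmxCB trmxC_mul trmxC_gram => ->; rewrite subrK.
Qed.

Lemma eigen_mulB v a : v *m M = a *: v -> v *m B *m M = (a - 1) *: (v *m B).
Proof.
by move=> vM; rewrite -mulmxA mulBM mulmxBr mulmxA vM -scalemxAl scalerBl scale1r.
Qed.

Lemma eigen_mulBt v a : v *m M = a *: v -> v *m B^t* *m M = (a + 1) *: (v *m B^t*).
Proof.
by move=> vM; rewrite -mulmxA mulBtM mulmxDr mulmxA vM -scalemxAl scalerDl scale1r.
Qed.

Lemma eigen_mulB_norm v a : v *m M = a *: v -> (v *m B) *m (v *m B)^t* = a *: (v *m v^t*).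
Proof. by move=> vM; rewrite trmxC_mul !mulmxA -(mulmxA v) vM -scalemxAl. Qed.

Lemma eigen_mulBX v a j :
  v *m M = a *: v -> v *m B ^+ j *m M = (a - j%:R) *: (v *m B ^+ j).
Proof.
move=> vM; elim: j => [|j IH]; first by rewrite expr0 mulmx1 subr0.
by rewrite exprSr -mulmxE (mulmxA v) (eigen_mulB IH) -natr1 opprD addrA.
Qed.

Lemma eigen_mulBtX v a j :
  v *m M = a *: v -> v *m B^t* ^+ j *m M = (a + j%:R) *: (v *m B^t* ^+ j).
Proof.
move=> vM; elim: j => [|j IH]; first by rewrite expr0 mulmx1 addr0.
by rewrite exprSr -mulmxE (mulmxA v) (eigen_mulBt IH) -natr1 addrA.
Qed.

Lemma eigen_mulBX_norm v a j : v *m M = a *: v ->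
  (v *m B ^+ j) *m (v *m B ^+ j)^t* = (\prod_(k < j) (a - k%:R)) *: (v *m v^t*).
Proof.
move=> vM; elim: j => [|j IH]; first by rewrite expr0 mulmx1 big_ord0 scale1r.
rewrite exprSr -mulmxE (mulmxA v) (eigen_mulB_norm (eigen_mulBX j vM)) IH.
by rewrite big_ord_recr scalerA mulrC.
Qed.

Lemma eigen_ortho v w a b : v *m M = a *: v -> w *m M = b *: w ->
  b \is Num.real -> a != b -> v *m w^t* = 0.
Proof.
move=> vM wM b_real ab.
have E : v *m M *m w^t* = v *m (w *m M)^t* by rewrite trmxC_mul trmxC_gram !mulmxA.
rewrite vM wM trmxCZ (conj_Creal b_real) -scalemxAl -scalemxAr in E.
by move/eqP: E; rewrite -subr_eq0 -scalerBl scaler_eq0 subr_eq0 (negbTE ab) => /eqP.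
Qed.

Lemma eigen_mulBX_gram v a i j : v *m M = a *: v -> a \is Num.real ->
  (v *m B ^+ i) *m (v *m B ^+ j)^t* =
    ((i == j)%:R * \prod_(k < i) (a - k%:R)) *: (v *m v^t*).
Proof.
move=> vM a_real; have [<-|ij] := eqVneq i j.
  by rewrite mul1r (eigen_mulBX_norm _ vM).
rewrite mul0r scale0r (eigen_ortho (eigen_mulBX i vM) (eigen_mulBX j vM)) ?rpredB ?realn //.
by apply: contra ij => /eqP/addrI/oppr_inj/eqP; rewrite eqr_nat.
Qed.

Lemma eigen_mulBX_eq0 v a j : v *m M = a *: v -> v *m B ^+ j = 0 ->
  \prod_(k < j) (a - k%:R) != 0 -> v = 0.
Proof.
move=> vM vBj prod_neq0; apply/eqP; rewrite -mul_trmxC_eq0.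
have := eigen_mulBX_norm j vM; rewrite vBj mul0mx => /esym/eqP.
by rewrite scaler_eq0 (negbTE prod_neq0).
Qed.

Lemma eigen_nat_mulBX v m : v *m M = m%:R *: v -> v *m B ^+ m.+1 = 0.
Proof.
move=> vM; apply/eqP; rewrite -mul_trmxC_eq0 (eigen_mulBX_norm _ vM).
by rewrite big_ord_recr /= subrr mulr0 scale0r.
Qed.

Lemma exists_highest_weight m (S : 'M[C]_(m, n)) (mu : nat) :
  stablemx S B -> stablemx S (B^t*) -> S *m B ^+ mu != 0 -> S *m B ^+ mu.+1 = 0 ->
  exists x : 'rV[C]_n,
    [/\ (x <= S)%MS, x *m M = mu%:R *: x, x *m B^t* = 0 & x *m x^t* = 1%:M].
Proof.
move=> SB SBt Smu Smu1.
have killS w : (w <= S)%MS -> w *m B ^+ mu.+1 = 0.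
  by move=> /submxP[E ->]; rewrite -mulmxA Smu1 mulmx0.
have raiseS w k : (w <= S)%MS -> (w *m B^t* ^+ k <= S)%MS.
  by move=> wS; rewrite (submx_trans (submxMr _ wS)) ?stablemxX.
have /rowV0Pn[_ /submxP[D ->] z_neq0] := Smu.
set y := D *m S; set z := y *m B ^+ mu.
rewrite mulmxA -/y -/z in z_neq0.
have yS : (y <= S)%MS := submxMl D S.
have zM : z *m M = 0 *: z.
  by rewrite scale0r mulmxA -(mulmxA y) mulmxE -exprSr killS ?mul0mx.
set x := z *m B^t* ^+ mu.
have xM : x *m M = mu%:R *: x by rewrite (eigen_mulBtX _ zM) add0r.
have xS : (x <= S)%MS by rewrite raiseS // (submx_trans (submxMr _ yS)) ?stablemxX.
have xBt : x *m B^t* = 0.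
  apply: (eigen_mulBX_eq0 (j := mu.+1) (eigen_mulBt xM)).
    by rewrite killS // -(expr1 (B^t*)) raiseS.
  by apply/prodf_neq0 => k _; rewrite natr1 subr_eq0 eqr_nat gtn_eqF.
have x_neq0 : x != 0.
  have xy : x *m y^t* = z *m z^t* by rewrite /x /z (trmxC_mul y) trmxCX !mulmxA.
  by apply: contraNneq z_neq0 => x0; rewrite -mul_trmxC_eq0 -xy x0 mul0mx.
have [c xx] := exists_normalized x_neq0.
exists (c *: x); split=> //; first exact: scalemx_sub.
  by rewrite -scalemxAl xM !scalerA mulrC.
by rewrite -scalemxAl xBt scaler0.
Qed.

Lemma stablemx_chainmx_trmxC x a p : x *m M = a *: x -> x *m B^t* = 0 ->
  stablemx (chainmx B x p) (B^t*).
Proof.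
move=> xM xBt; apply/row_subP => -[[|j] jp]; rewrite row_mul rowK /=.
  by rewrite expr0 mulmx1 xBt sub0mx.
rewrite exprSr -mulmxE (mulmxA x) -[_ *m B *m _]mulmxA (eigen_mulBX _ xM).
by rewrite scalemx_sub // chainmx_row_sub // ltnW.
Qed.

Lemma chainmx_gram x a p : x *m M = a *: x -> a \is Num.real -> x *m x^t* = 1%:M ->
  chainmx B x p *m (chainmx B x p)^t* =
    \matrix_(i, j) ((i == j)%:R * \prod_(k < i) (a - k%:R)).
Proof.
move=> xM a_real xx; apply/matrixP => i j.
by rewrite mul_trmxC_row !rowK (eigen_mulBX_gram _ _ xM a_real) xx !mxE eqxx mulr1.
Qed.

End CommutatorRelation.

Section Intertwiner.
Variables (C : numClosedFieldType) (n : nat) (B B' : 'M[C]_n).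

Definition isometric_intertwiner m m' (S : 'M[C]_(m, n)) (S' : 'M[C]_(m', n))
    (U : 'M[C]_n) :=
  [/\ forall p (W : 'M_(p, n)), (W <= S)%MS -> W *m U *m B' = W *m B *m U,
      forall p q (W : 'M_(p, n)) (W' : 'M_(q, n)), (W <= S)%MS -> (W' <= S)%MS ->
        (W *m U) *m (W' *m U)^t* = W *m W'^t* &
      (S *m U <= S')%MS].

Lemma isometric_intertwiner0 m m' (S' : 'M[C]_(m', n)) U :
  isometric_intertwiner (0 : 'M_(m, n)) S' U.
Proof.
split=> [p W /submx0null ->|p q W W' /submx0null -> /submx0null ->|];
  by rewrite !mul0mx ?sub0mx.
Qed.

Lemma isometric_intertwiner_eqmx m m' k k' (S : 'M[C]_(m, n)) (S' : 'M[C]_(m', n))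
    (T : 'M[C]_(k, n)) (T' : 'M[C]_(k', n)) U :
  (S :=: T)%MS -> (S' :=: T')%MS -> isometric_intertwiner T T' U ->
  isometric_intertwiner S S' U.
Proof.
move=> eqS eqS' [UB UU TU]; split=> [p W|p q W W'|]; rewrite ?eqS; first exact: UB.
  exact: UU.
by rewrite (eqmxMr U eqS) eqS'.
Qed.

(* Equal Gram matrices give A and A' the same left kernel, hence A *m pinvmx A fixes A'. *)
Lemma gram_eq_isometric_intertwiner p (A A' : 'M[C]_(p, n)) (T : 'M[C]_p) :
  A *m A^t* = A' *m A'^t* -> A *m B = T *m A -> A' *m B' = T *m A' ->
  isometric_intertwiner A A' (pinvmx A *m A').
Proof.
move=> gramA AB AB'; set U := pinvmx A *m A'.
have AU : A *m U = A'.
  apply/eqP; rewrite mulmxA -subr_eq0 -{2}(mul1mx A') -mulmxBl.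
  by apply/eqP/(gram_eq_ker gramA); rewrite mulmxBl mul1mx mulmxKpV ?subrr.
clearbody U.
split=> [q W /submxP[D ->]|q r W W' /submxP[D ->] /submxP[D' ->]|]; last by rewrite AU.
  by rewrite -!mulmxA [A *m (U *m B')]mulmxA AU AB' [A *m (B *m U)]mulmxA AB -mulmxA AU.
rewrite -!(mulmxA _ A U) AU !trmxC_mul !mulmxA -(mulmxA D A') -gramA.
by rewrite !mulmxA.
Qed.

Lemma isometric_intertwiner_adds m1 m2 m1' m2' (S1 : 'M[C]_(m1, n)) (S2 : 'M[C]_(m2, n))
    (S1' : 'M[C]_(m1', n)) (S2' : 'M[C]_(m2', n)) U1 U2 :
  stablemx S1 B -> stablemx S2 B -> S1 *m S2^t* = 0 -> S1' *m S2'^t* = 0 ->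
  isometric_intertwiner S1 S1' U1 -> isometric_intertwiner S2 S2' U2 ->
  isometric_intertwiner (S1 + S2)%MS (S1' + S2')%MS
    (proj_ortho S1 *m U1 + proj_ortho S2 *m U2).
Proof.
move=> S1B S2B S12 S12' [U1B U1U S1U] [U2B U2U S2U]; set U := _ + _.
have US1 p (W : 'M_(p, n)) : (W <= S1)%MS -> W *m U = W *m U1.
  move=> WS1; rewrite /U mulmxDr !(mulmxA W (proj_ortho _)) (proj_ortho_id WS1).
  rewrite proj_ortho_0 ?mul0mx ?addr0 //.
  by apply/orthomx1P; exact: ortho_submx WS1 (submx_refl S2) S12.
have US2 p (W : 'M_(p, n)) : (W <= S2)%MS -> W *m U = W *m U2.
  move=> WS2; rewrite /U mulmxDr !(mulmxA W (proj_ortho _)) (proj_ortho_id WS2).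
  rewrite proj_ortho_0 ?mul0mx ?add0r //.
  by apply/orthomx1P; exact: ortho_submx WS2 (submx_refl S1) (ortho_sym S12).
have U1S1' p (W : 'M_(p, n)) : (W <= S1)%MS -> (W *m U1 <= S1')%MS.
  by move=> WS1; exact: submx_trans (submxMr U1 WS1) S1U.
have U2S2' p (W : 'M_(p, n)) : (W <= S2)%MS -> (W *m U2 <= S2')%MS.
  by move=> WS2; exact: submx_trans (submxMr U2 WS2) S2U.
have [S1S1 S2S2] := (submx_refl S1, submx_refl S2).
split=> [p W /sub_addsmxP[[D1 D2] /= ->]|p q W W'|].
- have [W1S1 W2S2] := (submxMl D1 S1, submxMl D2 S2).
  have W1BS1 := submx_trans (submxMr B W1S1) S1B.
  have W2BS2 := submx_trans (submxMr B W2S2) S2B.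
  by rewrite !mulmxDl US1 // US2 // U1B // U2B // (US1 _ _ W1BS1) (US2 _ _ W2BS2).
- move=> /sub_addsmxP[[D1 D2] /= ->] /sub_addsmxP[[E1 E2] /= ->].
  have [D1S1 D2S2] := (submxMl D1 S1, submxMl D2 S2).
  have [E1S1 E2S2] := (submxMl E1 S1, submxMl E2 S2).
  rewrite !mulmxDl (US1 _ _ D1S1) (US2 _ _ D2S2) (US1 _ _ E1S1) (US2 _ _ E2S2).
  rewrite !trmxCD !mulmxDr U1U // U2U // (ortho_submx (U1S1' _ _ D1S1) (U2S2' _ _ E2S2) S12').
  rewrite (ortho_submx (U2S2' _ _ D2S2) (U1S1' _ _ E1S1) (ortho_sym S12')).
  by rewrite (ortho_submx D1S1 E2S2 S12) (ortho_submx D2S2 E1S1 (ortho_sym S12)).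
- have /sub_addsmxP[[D1 D2] /= ->] := submx_refl (S1 + S2)%MS.
  by rewrite mulmxDl US1 ?submxMl // US2 ?submxMl // addmx_sub_adds ?U1S1' ?U2S2' ?submxMl.
Qed.

End Intertwiner.

Section OrthoSplit.
Variables (C : numClosedFieldType) (n m p : nat).
Variables (S : 'M[C]_(m, n)) (A : 'M[C]_(p, n)).
Local Notation S1 := (S :&: kermx (A^t*))%MS.

Lemma cap_kermx_ortho : S1 *m A^t* = 0.
Proof. by apply/sub_kermxP; exact: capmxSr. Qed.

Lemma stablemx_cap_kermx X : stablemx S X -> stablemx A (X^t*) -> stablemx S1 X.
Proof.
move=> SX /submxP[D AX]; rewrite sub_capmx (submx_trans (submxMr _ (capmxSl _ _)) SX).
have XA : X *m A^t* = A^t* *m D^t* by rewrite -trmxC_mul -AX trmxC_mul trmxCK.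
by apply/sub_kermxP; rewrite -mulmxA XA mulmxA cap_kermx_ortho mul0mx.
Qed.

Lemma cap_kermx_disj : (S1 :&: A = 0)%MS.
Proof. exact/orthomx_disj/orthomx1P/cap_kermx_ortho. Qed.

Lemma addsmx_cap_kermx : (A <= S)%MS -> (S :=: S1 + A)%MS.
Proof.
move=> AS; have sub : (S1 + A <= S)%MS by rewrite addsmx_sub capmxSl.
apply/eqmx_sym/eqmxP.
rewrite -(mxrank_leqif_eq sub) mxrank_disjoint_sum ?cap_kermx_disj //.
have := mxrank_sum_cap S (kermx (A^t*)); rewrite mxrank_ker mxrank_trmxC.
have := rank_leq_col (S + kermx (A^t*))%MS; have := rank_leq_col A.
have := mxrankS sub; rewrite mxrank_disjoint_sum ?cap_kermx_disj // => *; apply/eqP; lia.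
Qed.

Lemma mxrank_cap_kermx_ltn : (A <= S)%MS -> A != 0 -> (\rank S1 < \rank S)%N.
Proof.
move=> AS A_neq0; rewrite [X in (_ < X)%N](addsmx_cap_kermx AS).
rewrite mxrank_disjoint_sum ?cap_kermx_disj //.
by rewrite -{1}[\rank S1]addn0 ltn_add2l lt0n mxrank_eq0.
Qed.

Lemma mxrank_cap_kermx_mul X j : (A <= S)%MS -> stablemx S1 X -> stablemx A X ->
  \rank (S *m X ^+ j) = (\rank (S1 *m X ^+ j) + \rank (A *m X ^+ j))%N.
Proof.
move=> AS S1X AX; rewrite (eqmxMr _ (addsmx_cap_kermx AS)) addsmxMr mxrank_disjoint_sum //.
exact/orthomx_disj/orthomx1P/(ortho_submx (stablemxX j S1X) (stablemxX j AX) cap_kermx_ortho).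
Qed.

End OrthoSplit.

Section IsometricEquivalence.
Variables (C : numClosedFieldType) (n N : nat) (B B' : 'M[C]_n).
Hypothesis relB : B *m (B *m B^t* - B^t* *m B) = - B.
Hypothesis relB' : B' *m (B' *m B'^t* - B'^t* *m B') = - B'.
Hypothesis B_nilpotent : B ^+ N = 0.

Lemma exists_isometric_intertwiner (S S' : 'M[C]_n) :
  stablemx S B -> stablemx S (B^t*) -> stablemx S' B' -> stablemx S' (B'^t*) ->
  (forall j, \rank (S *m B ^+ j) = \rank (S' *m B' ^+ j)) ->
  exists U, isometric_intertwiner B B' S S' U.
Proof.
have [r] := ubnP (\rank S); elim: r S S' => // r IH S S' rS SB SBt SB' SBt' rankS.
have [->|S_neq0] := eqVneq S 0; first by exists 0; exact: isometric_intertwiner0.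
have [mu [Smu Smu1]] : exists mu, S *m B ^+ mu != 0 /\ S *m B ^+ mu.+1 = 0.
  by apply: (last_nonzero_mulmxX (N := N) S_neq0); rewrite B_nilpotent mulmx0.
have S'mu : S' *m B' ^+ mu != 0 by rewrite -mxrank_eq0 -rankS mxrank_eq0.
have S'mu1 : S' *m B' ^+ mu.+1 = 0 by apply/eqP; rewrite -mxrank_eq0 -rankS mxrank_eq0 Smu1.
have [x [xS xM xBt xx]] := exists_highest_weight relB SB SBt Smu Smu1.
have [x' [xS' xM' xBt' xx']] := exists_highest_weight relB' SB' SBt' S'mu S'mu1.
set A := chainmx B x mu.+1; set A' := chainmx B' x' mu.+1.
have AB := chainmx_mulB (eigen_nat_mulBX relB xM).
have AB' := chainmx_mulB (eigen_nat_mulBX relB' xM').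
have gramA : A *m A^t* = A' *m A'^t*.
  by rewrite (chainmx_gram relB _ xM) ?(chainmx_gram relB' _ xM') ?realn.
have [AS AS'] := (chainmx_sub mu.+1 xS SB, chainmx_sub mu.+1 xS' SB').
have stableA : stablemx A B by rewrite AB submxMl.
have stableA' : stablemx A' B' by rewrite AB' submxMl.
have rankA j : \rank (A *m B ^+ j) = \rank (A' *m B' ^+ j).
  by rewrite (intertwinedX j AB) (intertwinedX j AB') (gram_eq_rank_mul _ gramA).
set S1 := (S :&: kermx (A^t*))%MS; set S1' := (S' :&: kermx (A'^t*))%MS.
have S1B : stablemx S1 B := stablemx_cap_kermx SB (stablemx_chainmx_trmxC relB _ xM xBt).
have S1B' : stablemx S1' B'.
  exact: stablemx_cap_kermx SB' (stablemx_chainmx_trmxC relB' _ xM' xBt').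
have S1Bt : stablemx S1 (B^t*) by apply: stablemx_cap_kermx SBt _; rewrite trmxCK.
have S1Bt' : stablemx S1' (B'^t*) by apply: stablemx_cap_kermx SBt' _; rewrite trmxCK.
have rankS1 j : \rank (S1 *m B ^+ j) = \rank (S1' *m B' ^+ j).
  apply/eqP; rewrite -(eqn_add2r (\rank (A *m B ^+ j))) -mxrank_cap_kermx_mul //.
  by rewrite rankA -mxrank_cap_kermx_mul // rankS.
have A_neq0 : A != 0 by rewrite chainmx_eq0 -mul_trmxC_eq0 xx matrix_nonzero1.
have rS1 : (\rank S1 < r)%N.
  by rewrite -ltnS (leq_trans _ rS) // ltnS mxrank_cap_kermx_ltn.
have [U1 U1_iso] := IH S1 S1' rS1 S1B S1Bt S1B' S1Bt' rankS1.
exists (proj_ortho S1 *m U1 + proj_ortho A *m (pinvmx A *m A')).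
apply: isometric_intertwiner_eqmx (addsmx_cap_kermx AS) (addsmx_cap_kermx AS') _.
apply: isometric_intertwiner_adds S1B stableA _ _ U1_iso _; try exact: cap_kermx_ortho.
exact: gram_eq_isometric_intertwiner gramA AB AB'.
Qed.

End IsometricEquivalence.

Lemma conjtrE (R : rcfType) n (A : 'M[R[i]]_n) : conjtr A = A^t*.
Proof. by rewrite /conjtr map_trmx. Qed.

Theorem proposition5p8 (R : rcfType) (n k : nat) (B B' h : 'M[R[i]]_n) :
  (1 <= k)%N ->
  B *m mxcomm B (conjtr B) = - B ->
  B ^+ k != 0 ->
  B ^+ k.+1 = 0 ->
  h \in unitmx ->
  B' = h *m B *m invmx h ->
  B' *m mxcomm B' (conjtr B') = - B' ->
  exists U : 'M[R[i]]_n, unitary U /\ B' = U *m B *m invmx U.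
Proof.
move=> _ relB _ B_nilpotent h_unit B'E relB'.
rewrite /mxcomm !conjtrE in relB relB'.
have hB : h *m B = B' *m h by rewrite B'E mulmxKV.
have rankB j : \rank (1%:M *m B ^+ j) = \rank (1%:M *m B' ^+ j).
  have h_free : row_free h by rewrite row_free_unit.
  rewrite !mul1mx -[RHS](mxrankMfree _ h_free) -(intertwinedX j hB).
  by rewrite (eqmxMfull _ (_ : row_full h)) ?row_full_unit.
have [U [UB UU _]] := exists_isometric_intertwiner relB relB' B_nilpotent
  (submx1 _) (submx1 _) (submx1 _) (submx1 _) rankB.
have {}UB : U *m B' = B *m U by have := UB _ 1%:M (submx1 _); rewrite !mul1mx.
have {}UU : U *m U^t* = 1%:M.
  by have := UU _ _ 1%:M 1%:M (submx1 _) (submx1 _); rewrite !mul1mx trmxC1.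
have U_unitary : U \is unitarymx by apply/unitarymxP.
exists (U^t*); split.
  by rewrite /unitary conjtrE; apply/unitarymxP; rewrite trmxC_unitary.
by rewrite invmx_unitary ?trmxC_unitary // trmxCK -mulmxA -UB mulmxA (mulmx1C UU) mul1mx.
Qed.
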